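(* Let $(\mathfrak m,I)$ be a non--degenerate pseudo--complex fundamental graded Lie algebra of $l$-th type with Tanaka prolongation $\mathfrak g=\bigoplus_{i\ge-l}\mathfrak g_i$, and let $\phi(\mathfrak m)\subset\mathfrak n\cong\mathbb{C}^N$ be the corresponding standard real submanifold. For every $X\in\mathfrak g_j$, the infinitesimal CR automorphism of $\phi(\mathfrak m)$ corresponding to $X$ is a weighted homogeneous holomorphic vector field on $\mathbb{C}^N=\mathfrak n$ of weighted degree $j$.
   Context: $(\mathfrak m,I)$: $\mathfrak m=\mathfrak g_{-l}\oplus\dots\oplus\mathfrak g_{-1}$ a real graded Lie algebra generated by $\mathfrak g_{-1}$, $\mathfrak g_{-l}\ne0$, bracket $\mathfrak g_{-1}\times\mathfrak g_{-1}\to\mathfrak g_{-2}$ nondegenerate, $I$ a complex structure on $\mathfrak g_{-1}$ with $[IX,IY]=[X,Y]$. Tanaka prolongation: $\mathfrak g_0$ = grading-preserving derivations of $\mathfrak m$ commuting with $I$ on $\mathfrak g_{-1}$; for $i>0$, $\mathfrak g_i=\{f\in\bigoplus_{j<0}\mathfrak g_j^*\otimes\mathfrak g_{j+i}:f([X,Y])=[f(X),Y]+[X,f(Y)]\ \forall X,Y\in\mathfrak m\}$; this is a finite-dimensional graded Lie algebra containing $\mathfrak m$ as its negative part. With $\mathfrak g_{-1}^{10}=\{X-iIX\}$, $\mathfrak g_{-1}^{01}=\{X+iIX\}$, $\mathfrak n=(\mathfrak g_{-l}\oplus\dots\oplus\mathfrak g_{-2})\otimes\mathbb{C}\oplus\mathfrak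 g_{-1}^{10}$, the standard real submanifold is $\phi(\mathfrak m)$, $\phi(X)=\exp^{-1}(\exp(X)\exp(-\tfrac12(X_{-1}+iIX_{-1})))$, i.e. the inclusion $\exp(\mathfrak m)\subset\exp(\mathfrak n)$ of nilpotent groups in exponential coordinates. The infinitesimal CR automorphism corresponding to $X\in\mathfrak g$ is the holomorphic vector field on $\exp(\mathfrak n)$ whose value at $\exp(Y)$, $Y\in\mathfrak n$, in the left-invariant trivialization $T\exp(\mathfrak n)\cong\mathfrak n$, is $(\mathrm{Ad}(\exp(-Y))X)_{\mathfrak n}$, the component in $\mathfrak m\otimes\mathbb{C}$ projected to $\mathfrak n$ along $\mathfrak g_{-1}^{01}$ (written in exponential coordinates). Weights: coordinates on $\mathfrak g_{-j}\otimes\mathbb{C}$ (resp. $\mathfrak g_{-1}^{10}$) have weight $j$, the corresponding coordinate vector fields weight $-j$; a field $\sum f_u\,\partial_u$ is weighted homogeneous of degree $d$ if each $f_u$ is weighted homogeneous of degree $d+[u]$. *)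

From HB Require Import structures.
From mathcomp Require Import all_boot all_order all_algebra.
From mathcomp Require Import complex.
Set Implicit Arguments. Unset Strict Implicit. Unset Printing Implicit Defensive.
Import Order.TTheory GRing.Theory Num.Theory.
Local Open Scope ring_scope.

(* m is the real vector space V = 'rV[R]_n written in a basis adapted to the  *)
(* grading: the i-th basis vector lies in g_{-(deg i)}.  The bracket is br,   *)
(* the complex structure on g_{-1} is (the restriction of) I.                 *)
Section Defs.
Variables (R : rcfType) (n : nat).
Local Notation V := 'rV[R]_n.
Local Notation C := (R[i]).
Local Notation VC := 'rV[C]_n.

Definition hom (deg : 'I_n -> nat) (k : nat) (X : V) : Prop :=
  forall j, X ord0 j != 0 -> deg j = k.

Definition nondeg_pseudo_complex_FGLA (l : nat) (deg : 'I_n -> nat)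
    (br : V -> V -> V) (I : V -> V) : Prop :=
  [/\
      (forall j, (1 <= deg j <= l)%N) /\ (exists j, deg j = l),
      [/\ (forall a X Y Z, br (a *: X + Y) Z = a *: br X Z + br Y Z),
          (forall a X Y Z, br X (a *: Y + Z) = a *: br X Y + br X Z),
          (forall X Y, br X Y = - br Y X) &
          (forall X Y Z, br X (br Y Z) + br Y (br Z X) + br Z (br X Y) = 0)],
      (forall a b X Y, hom deg a X -> hom deg b Y -> hom deg (a + b) (br X Y)),
      (forall S : V -> Prop, S 0 ->
         (forall a X Y, S X -> S Y -> S (a *: X + Y)) ->
         (forall X Y, S X -> S Y -> S (br X Y)) ->
         (forall X, hom deg 1 X -> S X) -> forall X, S X) &
      (forall X, hom deg 1 X -> (forall Y, hom deg 1 Y -> br X Y = 0) -> X = 0) /\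
      [/\ (forall a X Y, I (a *: X + Y) = a *: I X + I Y),
          (forall X, hom deg 1 X -> hom deg 1 (I X)),
          (forall X, hom deg 1 X -> I (I X) = - X) &
          (forall X Y, hom deg 1 X -> hom deg 1 Y -> br (I X) (I Y) = br X Y)]].

(* Tanaka prolongation.  An element Z of g (of any degree) is encoded by the  *)
(* map  [Y1; ...; Yr] |-> m-component of [...[[Z,Y1],Y2],...,Yr]  (Yi in m). *)
(* For Z in m this is ev Z; for Z = f in g_i, i >= 0 (a map f : m -> g with   *)
(* [f, Y] = f(Y)), the value on Y :: s is the encoding of f(Y) evaluated at s *)
(* and the value on [::] is 0.  In this encoding [Z, Y] is "shift Y".         *)
Definition Rep := seq V -> V.

Definition ev (br : V -> V -> V) (X : V) : Rep := fun s => foldl br X s.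
Definition shift (Y : V) (P : Rep) : Rep := fun s => P (Y :: s).

Definition encD (br : V -> V -> V) (D : V -> V) : Rep :=
  fun s => match s with [::] => 0 | Y :: s' => ev br (D Y) s' end.

Definition gneg (deg : 'I_n -> nat) (br : V -> V -> V) (a : nat) (P : Rep) :=
  exists X, hom deg a X /\ P = ev br X.

Definition g0 (deg : 'I_n -> nat) (br : V -> V -> V) (I : V -> V) (P : Rep) :=
  exists D : V -> V,
    [/\ (forall a X Y, D (a *: X + Y) = a *: D X + D Y),
        (forall k X, hom deg k X -> hom deg k (D X)),
        (forall X Y, D (br X Y) = br (D X) Y + br X (D Y)),
        (forall X, hom deg 1 X -> D (I X) = I (D X)) &
        P = encD br D].

(* gle i k P  (used with k <= i) : P is (the encoding of) an element of g_k *)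
Fixpoint gle (deg : 'I_n -> nat) (br : V -> V -> V) (I : V -> V) (i : nat)
    : nat -> Rep -> Prop :=
  match i with
  | 0 => fun _ P => g0 deg br I P
  | i'.+1 => fun k P =>
      if (k <= i')%N then gle deg br I i' k P else
      [/\ P [::] = 0,
          (forall a Y Z s, P ((a *: Y + Z) :: s) = a *: P (Y :: s) + P (Z :: s)),
          (forall a Y, (0 < a)%N -> hom deg a Y ->
             if (a <= k)%N then gle deg br I i' (k - a) (shift Y P)
             else gneg deg br (a - k) (shift Y P)) &
          (* f([X,Y]) = [f(X),Y] + [X,f(Y)] *)
          (forall X Y s, P (br X Y :: s) = P (X :: Y :: s) - P (Y :: X :: s))]
  end.

Definition gdeg (deg : 'I_n -> nat) (br : V -> V -> V) (I : V -> V) (j : int)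
    (P : Rep) : Prop :=
  match j with
  | Posz k => gle deg br I k k P
  | Negz k => gneg deg br k.+1 P
  end.

(* Complexification m (x) C = 'rV[C]_n and n = g_{<=-2}(x)C + g_{-1}^{10}.   *)
Definition imu : C := Complex 0 1.
Definition liftv (X : V) : VC := map_mx (fun x : R => Complex x 0) X.
Definition ReV (Z : VC) : V := map_mx (@complex.Re R) Z.
Definition ImV (Z : VC) : V := map_mx (@complex.Im R) Z.

(* complex-multilinear extension of an encoded element to words in m (x) C *)
Fixpoint cev (s : seq VC) (P : Rep) : VC :=
  match s with
  | [::] => liftv (P [::])
  | Z :: s' => cev s' (shift (ReV Z) P) + imu *: cev s' (shift (ImV Z) P)
  end.

Definition brC (br : V -> V -> V) (Z W : VC) : VC :=
  liftv (br (ReV Z) (ReV W) - br (ImV Z) (ImV W))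
  + imu *: liftv (br (ReV Z) (ImV W) + br (ImV Z) (ReV W)).

Definition IC (I : V -> V) (Z : VC) : VC := liftv (I (ReV Z)) + imu *: liftv (I (ImV Z)).

Definition comp (deg : 'I_n -> nat) (k : nat) (Z : VC) : VC :=
  \row_j (if deg j == k then Z ord0 j else 0).

(* Z lies in n  (its g_{-1}(x)C component lies in g_{-1}^{10} = {X - iIX}) *)
Definition in_n (deg : 'I_n -> nat) (I : V -> V) (Z : VC) : Prop :=
  IC I (comp deg 1 Z) = imu *: comp deg 1 Z.

(* projection of m (x) C onto n along g_{-1}^{01} *)
Definition projn (deg : 'I_n -> nat) (I : V -> V) (Z : VC) : VC :=
  Z - comp deg 1 Z + 2^-1 *: (comp deg 1 Z - imu *: IC I (comp deg 1 Z)).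

Definition series_value (u : nat -> VC) (w : VC) : Prop :=
  exists K0, forall K, (K0 <= K)%N -> \sum_(k < K) u k = w.

(* Taylor coefficients c_k of x / (1 - e^{-x}) = sum_k c_k x^k *)
Definition acoef (m : nat) : C := (-1) ^+ m / (m.+1)`!%:R.
Fixpoint bcs (k : nat) : seq C :=
  match k with
  | 0 => [:: 1]
  | k'.+1 => let s := bcs k' in
      rcons s (- \sum_(m < k'.+1) acoef m.+1 * nth 0 s (k' - m))
  end.
Definition bcoef (k : nat) : C := nth 0 (bcs k) k.

(* F is the infinitesimal CR automorphism corresponding to (the encoded) X:  *)
(* at exp(Y), Y in n, the left-invariant value is W' = (Ad(exp(-Y)) X)_n,     *)
(* where the m(x)C-component of Ad(exp(-Y))X = sum_k (1/k!) [..[X,Y],..,Y];    *)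
(* in exponential coordinates this is (ad Y / (1 - e^{-ad Y})) W'.            *)
Definition inf_CR_aut (deg : 'I_n -> nat) (br : V -> V -> V) (I : V -> V)
    (P : Rep) (F : VC -> VC) : Prop :=
  forall Y, in_n deg I Y ->
    exists W,
      series_value (fun k => (k`!%:R)^-1 *: cev (nseq k Y) P) W /\
      series_value (fun k => bcoef k *: iter k (brC br Y) (projn deg I W)) (F Y).

Definition dil (deg : 'I_n -> nat) (t : C) (Z : VC) : VC :=
  \row_j (t ^+ deg j * Z ord0 j).

(* F is weighted homogeneous of weighted degree d on n: each coefficient of  *)
(* the coordinate vector field of weight k is weighted homogeneous of degree *)
(* d + k *)
Definition weighted_homogeneous (deg : 'I_n -> nat) (I : V -> V) (d : int)
    (F : VC -> VC) : Prop :=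
  forall t : C, t != 0 -> forall Y, in_n deg I Y ->
    F (dil deg t Y) = t ^ d *: dil deg t (F Y).

End Defs.

From Pilot Require Import Defs.
From HB Require Import structures.
From mathcomp Require Import all_boot all_order all_algebra.
From mathcomp Require Import complex ring zify.
Set Implicit Arguments. Unset Strict Implicit. Unset Printing Implicit Defensive.
Import Order.TTheory GRing.Theory Num.Theory.
Local Open Scope ring_scope.

(* For t <> 0 the weighted dilation d_t (multiplication by t^k on
   g_{-k} (x) C) is an automorphism of the complexified bracket which commutes
   with the projection onto n along g_{-1}^{01}.  An element X of g_j satisfies
   [..[X, d_t Y_1], .., d_t Y_r]_m = t^j d_t [..[X, Y_1], .., Y_r]_m, by
   induction on r, since [X, Y] lies in g_{j-a} for Y in g_{-a}.  As m is
   nilpotent, both series defining the vector field are finite sums, and each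
   of their terms picks up the factor t^j d_t: this is weighted homogeneity of
   degree j. *)

Local Notation ReV := Defs.ReV.
Local Notation ImV := Defs.ImV.
Local Notation hom := Defs.hom.
Local Notation comp := Defs.comp.

Section Linear.
Variables (K : pzRingType) (M1 M2 : lmodType K) (f : M1 -> M2).
Hypothesis f_lin : linear f.

Lemma linD x y : f (x + y) = f x + f y.
Proof. by rewrite -[x]scale1r f_lin !scale1r. Qed.

Lemma lin0 : f 0 = 0.
Proof. by apply: (@addrI _ (f 0)); rewrite -linD !addr0. Qed.

Lemma linZ c x : f (c *: x) = c *: f x.
Proof. by rewrite -[c *: x]addr0 f_lin lin0 addr0. Qed.

Lemma linN x : f (- x) = - f x.
Proof. by rewrite -scaleN1r linZ scaleN1r. Qed.

Lemma lin_sum (J : Type) (r : seq J) (P : pred J) (F : J -> M1) :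
  f (\sum_(i <- r | P i) F i) = \sum_(i <- r | P i) f (F i).
Proof. exact: (big_morph f linD lin0). Qed.

End Linear.

Lemma series_value_finite (R : rcfType) (n : nat) (u : nat -> 'rV[R[i]]_n) K0 :
  (forall k, (K0 <= k)%N -> u k = 0) -> series_value u (\sum_(k < K0) u k).
Proof.
move=> u_eq0; exists K0 => K leK0K.
rewrite -(subnKC leK0K) big_split_ord /= [X in _ + X]big1 ?addr0 // => i _.
by apply: u_eq0; rewrite leq_addr.
Qed.

Section Complexification.
Variables (R : rcfType) (n : nat).
Local Notation V := 'rV[R]_n.
Local Notation C := (R[i]).
Local Notation VC := 'rV[C]_n.

Definition real_linear (g : V -> VC) :=
  forall (x : R) A B, g (x *: A + B) = x%:C%C *: g A + g B.

Definition cext (g : V -> VC) (Z : VC) : VC := g (ReV Z) + imu R *: g (ImV Z).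

Lemma liftv_real_linear : real_linear (@liftv R n).
Proof. by move=> x A B; apply/rowP=> j; rewrite !mxE; simpc; congr Complex; ring. Qed.

Lemma liftv0 : liftv (0 : V) = 0.
Proof. by apply/rowP=> j; rewrite !mxE. Qed.

Lemma ReV_lin (c : C) (Z1 Z2 : VC) :
  ReV (c *: Z1 + Z2) = complex.Re c *: ReV Z1 + ((- complex.Im c) *: ImV Z1 + ReV Z2).
Proof.
apply/rowP=> j; rewrite !mxE.
by case: c (Z1 0 j) (Z2 0 j) => [a b] [c d] [e f]; simpc => /=; ring.
Qed.

Lemma ImV_lin (c : C) (Z1 Z2 : VC) :
  ImV (c *: Z1 + Z2) = complex.Im c *: ReV Z1 + (complex.Re c *: ImV Z1 + ImV Z2).
Proof.
apply/rowP=> j; rewrite !mxE.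
by case: c (Z1 0 j) (Z2 0 j) => [a b] [c d] [e f]; simpc => /=; ring.
Qed.

Lemma cext_linear g : real_linear g -> linear (cext g).
Proof.
move=> g_lin c Z1 Z2; rewrite /cext ReV_lin ImV_lin !g_lin.
apply/rowP=> j; rewrite !mxE.
move: (g (ReV Z1) 0 j) (g (ImV Z1) 0 j) (g (ReV Z2) 0 j) (g (ImV Z2) 0 j)
  => [? ?] [? ?] [? ?] [? ?].
by case: c => a b; rewrite /imu; simpc => /=; congr Complex; ring.
Qed.

End Complexification.

Section Grading.
Variables (n l : nat) (deg : 'I_n -> nat).
Hypothesis deg_range : forall j, (1 <= deg j <= l)%N.

(* [comp deg k] over an arbitrary ring, so that it also applies to m itself. *)
Definition gcomp (K : pzRingType) k (Z : 'rV[K]_n) : 'rV[K]_n :=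
  \row_j (if deg j == k then Z ord0 j else 0).

Definition homog (K : pzRingType) k (Z : 'rV[K]_n) := forall j, deg j != k -> Z 0 j = 0.

Lemma gcomp_sum (K : pzRingType) (Z : 'rV[K]_n) : Z = \sum_(a < l) gcomp a.+1 Z.
Proof.
apply/rowP=> j; rewrite summxE.
have /andP[deg_gt0 deg_le] := deg_range j.
have lt_j : ((deg j).-1 < l)%N by rewrite prednK.
rewrite (bigD1 (Ordinal lt_j)) //= big1 ?addr0; first by rewrite mxE prednK // eqxx.
move=> i /eqP ne_i; rewrite mxE; case: eqP => // eq_i; exfalso; apply: ne_i.
by apply: val_inj => /=; rewrite eq_i.
Qed.

Lemma gcomp_homog (K : pzRingType) k (Z : 'rV[K]_n) : homog k (gcomp k Z).
Proof. by move=> j /negbTE ne_j; rewrite mxE ne_j. Qed.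

Lemma homogD (K : pzRingType) k (Z1 Z2 : 'rV[K]_n) :
  homog k Z1 -> homog k Z2 -> homog k (Z1 + Z2).
Proof. by move=> h1 h2 j ne_j; rewrite mxE h1 // h2 // addr0. Qed.

Lemma homogN (K : pzRingType) k (Z : 'rV[K]_n) : homog k Z -> homog k (- Z).
Proof. by move=> h j ne_j; rewrite mxE h // oppr0. Qed.

Lemma homogZ (K : pzRingType) k (c : K) (Z : 'rV[K]_n) : homog k Z -> homog k (c *: Z).
Proof. by move=> h j ne_j; rewrite mxE h // mulr0. Qed.

Variable R : rcfType.
Local Notation V := 'rV[R]_n.
Local Notation C := (R[i]).
Local Notation VC := 'rV[C]_n.

Lemma homP k (X : V) : hom deg k X <-> homog k X.
Proof.
split=> h j; first by move=> ne_j; apply/eqP; apply: contraNT ne_j => /h ->.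
by move=> nz_X; apply/eqP; apply: contraNT nz_X => /h ->.
Qed.

Lemma liftv_homog k (A : V) : homog k A -> homog k (liftv A).
Proof. by move=> h j ne_j; rewrite mxE h. Qed.

Lemma ReV_homog k (Z : VC) : homog k Z -> homog k (ReV Z).
Proof. by move=> h j ne_j; rewrite mxE h. Qed.

Lemma ImV_homog k (Z : VC) : homog k Z -> homog k (ImV Z).
Proof. by move=> h j ne_j; rewrite mxE h. Qed.

Lemma ReV_comp k (Z : VC) : ReV (comp deg k Z) = gcomp k (ReV Z).
Proof. by apply/rowP=> j; rewrite !mxE; case: ifP. Qed.

Lemma ImV_comp k (Z : VC) : ImV (comp deg k Z) = gcomp k (ImV Z).
Proof. by apply/rowP=> j; rewrite !mxE; case: ifP. Qed.

Lemma dil_linear (t : C) : linear (dil deg t).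
Proof. by move=> c Z1 Z2; apply/rowP=> j; rewrite !mxE; ring. Qed.

Lemma dil_homog (t : C) k (Z : VC) : homog k Z -> dil deg t Z = t ^+ k *: Z.
Proof.
move=> h; apply/rowP=> j; rewrite !mxE.
by case: (eqVneq (deg j) k) => [->|/h ->] //; rewrite !mulr0.
Qed.

Lemma dil_comp_sum (t : C) (Z : VC) :
  dil deg t Z = \sum_(a < l) t ^+ a.+1 *: comp deg a.+1 Z.
Proof.
rewrite {1}(gcomp_sum Z) (lin_sum (dil_linear t)).
by apply: eq_bigr => a _; rewrite (@dil_homog t a.+1) //; apply: gcomp_homog.
Qed.

Lemma comp_dil (t : C) k (Z : VC) : comp deg k (dil deg t Z) = t ^+ k *: comp deg k Z.
Proof. by apply/rowP=> j; rewrite !mxE; case: eqP => [->|]; rewrite ?mulr0. Qed.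

End Grading.

Section Prolongation.
Variables (R : rcfType) (n l : nat) (deg : 'I_n -> nat).
Variables (br : 'rV[R]_n -> 'rV[R]_n -> 'rV[R]_n) (I : 'rV[R]_n -> 'rV[R]_n).
Local Notation V := 'rV[R]_n.
Local Notation C := (R[i]).
Local Notation VC := 'rV[C]_n.
Local Notation im := (imu R).
Local Notation gdeg := (gdeg deg br I).
Hypothesis deg_range : forall j, (1 <= deg j <= l)%N.
Hypothesis brDl : forall a X Y Z, br (a *: X + Y) Z = a *: br X Z + br Y Z.
Hypothesis brDr : forall a X Y Z, br X (a *: Y + Z) = a *: br X Y + br X Z.
Hypothesis br_hom : forall a b X Y, hom deg a X -> hom deg b Y -> hom deg (a + b) (br X Y).
Hypothesis I_lin : forall a X Y, I (a *: X + Y) = a *: I X + I Y.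
Hypothesis I_hom1 : forall X, hom deg 1 X -> hom deg 1 (I X).

Lemma foldl_brDl s a X Y : foldl br (a *: X + Y) s = a *: foldl br X s + foldl br Y s.
Proof. by elim: s a X Y => [|Z s IH] a X Y //=; rewrite brDl IH. Qed.

Lemma gle_leq i m P : (m <= i)%N -> gle deg br I i m P <-> gle deg br I m m P.
Proof.
elim: i m P => [|i IH] m P le_mi; first by move: le_mi; rewrite leqn0 => /eqP ->.
move: le_mi; rewrite leq_eqVlt => /orP[/eqP -> //|lt_mi].
by rewrite /= -ltnS lt_mi; apply: IH; rewrite -ltnS.
Qed.

Lemma gdeg_nonneg_nil (k : nat) P : gdeg k P -> P [::] = 0.
Proof. by case: k => [|k] /=; [case=> D [_ _ _ _ ->] | rewrite ltnn; case]. Qed.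

Lemma gdeg_linear j P : gdeg j P ->
  forall a Y Z s, P ((a *: Y + Z) :: s) = a *: P (Y :: s) + P (Z :: s).
Proof.
case: j => [[|k]|k] /=.
- by case=> D [D_lin _ _ _ ->] a Y Z s /=; rewrite /ev D_lin foldl_brDl.
- by rewrite ltnn; case.
- by case=> X [_ ->] a Y Z s; rewrite /ev /= brDr foldl_brDl.
Qed.

Lemma gdeg_shift j P a Y : gdeg j P -> (0 < a)%N -> hom deg a Y ->
  gdeg (j - a%:Z) (shift Y P).
Proof.
move=> P_j a_gt0 Y_a.
case: j P_j => [[|k]|k] /=.
- case=> D [_ D_hom _ _ ->].
  have -> : (0%:Z - a%:Z) = Negz a.-1 by rewrite NegzE prednK // sub0r.
  by rewrite /= prednK //; exists (D Y); split => //; apply: D_hom.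
- rewrite ltnn; case=> _ _ /(_ a Y a_gt0 Y_a) P_Y _.
  case: (leqP a k.+1) => le_ak; [rewrite le_ak in P_Y | rewrite leqNgt le_ak in P_Y].
    have le_k : (k.+1 - a <= k)%N by lia.
    by rewrite subzn //=; apply/(gle_leq _ le_k).
  have -> : (k.+1%:Z - a%:Z) = Negz (a - k.+1).-1 by lia.
  by rewrite /= prednK // subn_gt0.
- case=> X [X_k ->].
  have -> : (Negz k - a%:Z) = Negz (k + a) by lia.
  by exists (br X Y); split => //; rewrite -addSn; apply: br_hom.
Qed.

Lemma gdeg_nilpotent s j P : gdeg j P -> (j + l%:Z < (size s)%:Z) -> P s = 0.
Proof.
elim: s j P => [|Y s IH] j P P_j lt_s.
  case: j P_j lt_s => [k|k] P_j lt_s; rewrite /= in lt_s; first by lia.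
  case: P_j => X [X_k ->]; rewrite /ev /=.
  have lt_lk : (l < k.+1)%N by lia.
  apply/rowP=> i; rewrite mxE; apply/eqP; apply: contraTT lt_lk => /X_k deg_i.
  by rewrite -leqNgt -deg_i; case/andP: (deg_range i).
have P_lin : linear (fun Y => P (Y :: s)) by move=> c x y; apply: (gdeg_linear P_j).
rewrite (gcomp_sum deg_range Y) (lin_sum P_lin) big1 // => a _.
apply: (IH (j - a.+1%:Z) (shift (gcomp deg a.+1 Y) P)); last by move: lt_s => /=; lia.
by apply: gdeg_shift => //; apply/homP; apply: gcomp_homog.
Qed.

Lemma cev_ext s (P Q : Rep R n) : P =1 Q -> cev s P = cev s Q.
Proof.
elim: s P Q => [|Z s IH] P Q eq_PQ /=; first by rewrite eq_PQ.
by congr (_ + _ *: _); apply: IH => t; rewrite /shift eq_PQ.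
Qed.

Lemma cev_real_linear s (x : R) (P Q : Rep R n) :
  cev s (fun t => x *: P t + Q t) = x%:C%C *: cev s P + cev s Q.
Proof.
elim: s x P Q => [|Z s IH] x P Q /=; first by rewrite liftv_real_linear.
rewrite (IH x (shift (ReV Z) P)) (IH x (shift (ImV Z) P)).
by apply/rowP=> j; rewrite !mxE; ring.
Qed.

Lemma cev_eq0 s (P : Rep R n) : (forall t, size t = size s -> P t = 0) -> cev s P = 0.
Proof.
elim: s P => [|Z s IH] P P_eq0 /=; first by rewrite P_eq0 // liftv0.
by rewrite !IH ?scaler0 ?addr0 // => t size_t; rewrite /shift P_eq0 //= size_t.
Qed.

Lemma cev_shift_real_linear j P s : gdeg j P -> real_linear (fun A => cev s (shift A P)).
Proof.
move=> P_j x A B; rewrite -cev_real_linear; apply: cev_ext => t.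
by rewrite /shift (gdeg_linear P_j).
Qed.

Lemma cev_dil (t : C) s j P : t != 0 -> gdeg j P ->
  cev (map (dil deg t) s) P = t ^ j *: dil deg t (cev s P).
Proof.
move=> t_neq0; elim: s j P => [|Z s IH] j P P_j /=.
  case: j P_j => [k|k] P_j.
    by rewrite (gdeg_nonneg_nil P_j) liftv0 (lin0 (dil_linear _ _)) scaler0.
  case: P_j => X [X_k ->]; rewrite /ev /=.
  rewrite (dil_homog t (k := k.+1)); last by apply: liftv_homog; apply/homP.
  change (t ^ Negz k) with ((t ^+ k.+1)^-1).
  by rewrite scalerA mulVf ?scale1r // expf_neq0.
set g' := fun A => cev (map (dil deg t) s) (shift A P).
set g := fun A => cev s (shift A P).
change (cext g' (dil deg t Z) = t ^ j *: dil deg t (cext g Z)).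
have g'_lin := cext_linear (cev_shift_real_linear _ P_j : real_linear g').
have g_lin := cext_linear (cev_shift_real_linear _ P_j : real_linear g).
rewrite (dil_comp_sum deg_range) (lin_sum g'_lin) {2}(gcomp_sum deg_range Z).
rewrite (lin_sum g_lin) (lin_sum (dil_linear _ _)) scaler_sumr.
apply: eq_bigr => a _; rewrite (linZ g'_lin) /cext ReV_comp ImV_comp /g' /g.
have IH_a A : homog deg a.+1 A ->
    cev (map (dil deg t) s) (shift A P) = t ^ (j - a.+1%:Z) *: dil deg t (cev s (shift A P)).
  by move=> A_a; apply: IH; apply: gdeg_shift => //; apply/homP.
rewrite !IH_a; try apply: gcomp_homog.
have -> : t ^ j = t ^+ a.+1 * t ^ (j - a.+1%:Z) by rewrite exprnP -expfzDr // addrC subrK.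
rewrite (linD (dil_linear _ _)) (linZ (dil_linear _ _)) !scalerDr !scalerA.
by apply/rowP=> i; rewrite !mxE; ring.
Qed.

Lemma brC_cextr (Y Z : VC) :
  brC br Y Z = cext (fun A => liftv (br (ReV Y) A) + im *: liftv (br (ImV Y) A)) Z.
Proof.
rewrite /brC /cext; apply/rowP=> j; rewrite !mxE /imu; simpc => /=.
by congr Complex; ring.
Qed.

Lemma brC_cextl (Y Z : VC) :
  brC br Y Z = cext (fun A => liftv (br A (ReV Z)) + im *: liftv (br A (ImV Z))) Y.
Proof.
rewrite /brC /cext; apply/rowP=> j; rewrite !mxE /imu; simpc => /=.
by congr Complex; ring.
Qed.

Lemma brC_linear (Y : VC) : linear (brC br Y).
Proof.
move=> c Z1 Z2; rewrite !brC_cextr; apply: cext_linear => x A B.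
by rewrite !brDr !liftv_real_linear; apply/rowP=> j; rewrite !mxE; ring.
Qed.

Lemma brC_linear_l (Z : VC) : linear (brC br ^~ Z).
Proof.
move=> c Y1 Y2; rewrite !brC_cextl; apply: cext_linear => x A B.
by rewrite !brDl !liftv_real_linear; apply/rowP=> j; rewrite !mxE; ring.
Qed.

Lemma brC_homog a b (Y Z : VC) :
  homog deg a Y -> homog deg b Z -> homog deg (a + b) (brC br Y Z).
Proof.
move=> Y_a Z_b.
have br_homog A B : homog deg a A -> homog deg b B -> homog deg (a + b) (br A B).
  by move=> /homP A_a /homP B_b; apply/homP; apply: br_hom.
have [ReY ImY] := (ReV_homog Y_a, ImV_homog Y_a).
have [ReZ ImZ] := (ReV_homog Z_b, ImV_homog Z_b).
by apply: homogD; [|apply: homogZ]; apply: liftv_homog;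
  [apply: homogD; [|apply: homogN] | apply: homogD]; apply: br_homog.
Qed.

Lemma brC_dil (t : C) (Y Z : VC) :
  brC br (dil deg t Y) (dil deg t Z) = dil deg t (brC br Y Z).
Proof.
have bilin_dil : dil deg t (brC br Y Z) = \sum_(a < l) \sum_(b < l)
    (t ^+ a.+1 * t ^+ b.+1) *: brC br (comp deg a.+1 Y) (comp deg b.+1 Z).
  rewrite {1}(gcomp_sum deg_range Y) (lin_sum (brC_linear_l Z)).
  rewrite (lin_sum (dil_linear _ _)); apply: eq_bigr => a _.
  rewrite {1}(gcomp_sum deg_range Z) (lin_sum (brC_linear _)).
  rewrite (lin_sum (dil_linear _ _)); apply: eq_bigr => b _.
  by rewrite (dil_homog t (k := a.+1 + b.+1)) ?exprD //; apply: brC_homog; apply: gcomp_homog.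
rewrite bilin_dil (dil_comp_sum deg_range t Y) (lin_sum (brC_linear_l _)).
apply: eq_bigr => a _; rewrite (linZ (brC_linear_l _)) (dil_comp_sum deg_range t Z).
rewrite (lin_sum (brC_linear _)) scaler_sumr; apply: eq_bigr => b _.
by rewrite (linZ (brC_linear _)) scalerA.
Qed.

Lemma iter_brC_dil (t : C) k (Y U : VC) c :
  iter k (brC br (dil deg t Y)) (c *: dil deg t U) = c *: dil deg t (iter k (brC br Y) U).
Proof. by elim: k => [|k IH] //=; rewrite IH (linZ (brC_linear _)) brC_dil. Qed.

Definition vanish_below m (Z : VC) := forall j, (deg j < m)%N -> Z 0 j = 0.

Lemma brC_vanish_below m (Y Z : VC) : vanish_below m Z -> vanish_below m.+1 (brC br Y Z).
Proof.
move=> Z_m.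
have vanish_sum (F : 'I_l -> VC) :
    (forall a, vanish_below m.+1 (F a)) -> vanish_below m.+1 (\sum_(a < l) F a).
  move=> F_m; apply: (big_ind (vanish_below m.+1)) => // [j _ | x y x_m y_m j lt_j].
    by rewrite mxE.
  by rewrite mxE x_m // y_m // addr0.
rewrite (gcomp_sum deg_range Y) (lin_sum (brC_linear_l Z)).
apply: (vanish_sum) => a; rewrite (gcomp_sum deg_range Z) (lin_sum (brC_linear _)).
apply: (vanish_sum) => b.
have [lt_bm | le_mb] := ltnP b.+1 m.
  have -> : gcomp deg b.+1 Z = 0.
    by apply/rowP=> j; rewrite !mxE; case: eqP => // deg_j; apply: Z_m; rewrite deg_j.
  by rewrite (lin0 (brC_linear _)) => j _; rewrite mxE.
move=> j lt_j; apply: (brC_homog (gcomp_homog (k := a.+1) Y) (gcomp_homog (k := b.+1) Z)).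
by apply: contraTneq lt_j => ->; rewrite -leqNgt; lia.
Qed.

Lemma iter_brC_nilpotent k (Y Z : VC) : (l <= k)%N -> iter k (brC br Y) Z = 0.
Proof.
have iter_vanish k' : vanish_below k'.+1 (iter k' (brC br Y) Z).
  elim: k' => [|k' IH] /=; last exact: brC_vanish_below.
  by move=> j; rewrite ltnS leqn0 => /eqP deg_j; have := deg_range j; rewrite deg_j.
move=> le_lk; apply/rowP=> j; rewrite mxE; apply: iter_vanish.
by case/andP: (deg_range j) => _ le_j; rewrite ltnS (leq_trans le_j le_lk).
Qed.

Lemma IC_linear : linear (IC I).
Proof.
have liftv_I_lin : real_linear (fun A => liftv (I A)).
  by move=> x A B; rewrite I_lin liftv_real_linear.
exact: cext_linear liftv_I_lin.
Qed.

Lemma IC_homog1 (Z : VC) : homog deg 1 Z -> homog deg 1 (IC I Z).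
Proof.
move=> Z_1; have I_homog A : homog deg 1 A -> homog deg 1 (liftv (I A)).
  by move=> /homP A_1; apply: liftv_homog; apply/homP; apply: I_hom1.
by apply: homogD; [|apply: homogZ]; apply: I_homog; [apply: ReV_homog | apply: ImV_homog].
Qed.

Lemma projnZ c (Z : VC) : projn deg I (c *: Z) = c *: projn deg I Z.
Proof.
rewrite /projn.
have -> : comp deg 1 (c *: Z) = c *: comp deg 1 Z.
  by apply/rowP=> j; rewrite !mxE; case: ifP; rewrite ?mulr0.
rewrite (linZ IC_linear); move: (comp deg 1 Z) (IC I (comp deg 1 Z)) => Z1 IZ1.
by apply/rowP=> j; rewrite !mxE; ring.
Qed.

Lemma projn_dil (t : C) (Z : VC) : projn deg I (dil deg t Z) = dil deg t (projn deg I Z).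
Proof.
have Z_1 : homog deg 1 (comp deg 1 Z) by apply: gcomp_homog.
have dil_Z1 : dil deg t (comp deg 1 Z) = t *: comp deg 1 Z by rewrite (dil_homog _ Z_1).
have dil_IZ1 : dil deg t (IC I (comp deg 1 Z)) = t *: IC I (comp deg 1 Z).
  by rewrite (dil_homog _ (IC_homog1 Z_1)).
have dil_lin := dil_linear deg t.
rewrite /projn (comp_dil deg t 1) expr1 (linZ IC_linear).
rewrite !(linD dil_lin) !(linN dil_lin) !(linZ dil_lin).
rewrite (linD dil_lin) (linN dil_lin) (linZ dil_lin) dil_Z1 dil_IZ1.
move: (comp deg 1 Z) (IC I (comp deg 1 Z)) (dil deg t Z) => Z1 IZ1 dZ.
by apply/rowP=> j; rewrite !mxE; ring.
Qed.

(* The m-component of Ad(exp(-Y)) X; the words of length > j + l are killed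
   by X in g_j, so this finite sum is the whole series. *)
Definition Ad_m (j : int) (X : Rep R n) (Y : VC) : VC :=
  \sum_(k < (`|j|%N + l).+1) (k`!%:R)^-1 *: cev (nseq k Y) X.

Definition CR_field (j : int) (X : Rep R n) (Y : VC) : VC :=
  \sum_(k < l) bcoef R k *: iter k (brC br Y) (projn deg I (Ad_m j X Y)).

Lemma CR_field_inf_CR_aut j X : gdeg j X -> inf_CR_aut deg br I X (CR_field j X).
Proof.
move=> X_j Y _; exists (Ad_m j X Y); split.
  apply: series_value_finite => k lt_k; rewrite cev_eq0 ?scaler0 // => s size_s.
  by apply: (gdeg_nilpotent X_j); rewrite size_s size_nseq; lia.
by apply: series_value_finite => k le_lk; rewrite iter_brC_nilpotent // scaler0.
Qed.

Lemma CR_field_homogeneous j X : gdeg j X -> weighted_homogeneous deg I j (CR_field j X).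
Proof.
move=> X_j t t_neq0 Y _.
have Ad_m_dil : Ad_m j X (dil deg t Y) = t ^ j *: dil deg t (Ad_m j X Y).
  rewrite /Ad_m (lin_sum (dil_linear _ _)) scaler_sumr; apply: eq_bigr => k _.
  by rewrite -map_nseq (cev_dil _ t_neq0 X_j) (linZ (dil_linear _ _)) !scalerA mulrC.
rewrite /CR_field Ad_m_dil projnZ projn_dil (lin_sum (dil_linear _ _)) scaler_sumr.
by apply: eq_bigr => k _; rewrite iter_brC_dil (linZ (dil_linear _ _)) !scalerA mulrC.
Qed.

End Prolongation.

Theorem mainTheorem6 (R : rcfType) (n l : nat) (deg : 'I_n -> nat)
    (br : 'rV[R]_n -> 'rV[R]_n -> 'rV[R]_n) (I : 'rV[R]_n -> 'rV[R]_n)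
    (j : int) (X : Rep R n) :
  nondeg_pseudo_complex_FGLA l deg br I ->
  gdeg deg br I j X ->
  exists F : 'rV[R[i]]_n -> 'rV[R[i]]_n,
    inf_CR_aut deg br I X F /\ weighted_homogeneous deg I j F.
Proof.
move=> [[deg_range _] [brDl brDr _ _] br_hom _ [_ [I_lin I_hom1 _ _]]] X_j.
exists (CR_field l deg br I j X); split.
  exact: (CR_field_inf_CR_aut deg_range brDl brDr br_hom).
exact: (CR_field_homogeneous deg_range brDl brDr br_hom I_lin I_hom1).
Qed.
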